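(* Consider the polynomial representation of $\mathbf H^{\mathrm{gr}}_N[c_1,\dots,c_{l-1}]$ by rational Demazure–Lusztig operators and the restriction map $\operatorname{Res}$ described in the context. (1) For each $i$, $\operatorname{Res}X_i=\sum_{j\le i}g_j\mathsf u_j$ for some rational functions $g_j=g_j(w_1,\dots,w_N)$, and the leading term of $\operatorname{Res}X_i$ is $g_i\mathsf u_i$. Moreover the leading term of $\operatorname{Res}X_N$ is $\prod_{j\ne N}\frac{w_N-w_j-\mathbf t}{w_N-w_j}\mathsf u_N$. (2) For each $i$, $\operatorname{Res}X_i^{-1}=\sum_{j\ge i}g'_j\mathsf u_j^{-1}$ for some rational functions $g'_j$, and the leading term of $\operatorname{Res}X_i^{-1}$ is $g'_i\mathsf u_i^{-1}$. Moreover the leading term of $\operatorname{Res}X_1^{-1}$ is $\prod_{j\ne1}\frac{w_1-w_j+\mathbf t}{w_1-w_j}\mathsf u_1^{-1}$. (3) For each $i$, $\operatorname{Res}Y_i=\sum_{j\ge i}g''_j\mathsf u_j^{-1}$ for some rational functions $g''_j$, and the leading term of $\operatorname{Res}Y_i$ is $g''_i\mathsf u_i^{-1}$. Moreover the leading term of $\operatorname{Res}Y_1$ is $\prod_{k=1}^l(w_1-\hbar-z_k)\prod_{j\ne1}\frac{w_1-w_j+\mathbf t}{w_1-w_j}\mathsf u_1^{-1}$.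
   Context: $\mathbf H^{\mathrm{gr}}_N$ is the $\mathbb C[\hbar,\mathbf t]$-algebra generated by $s_1,\dots,s_{N-1}$, $X_i^{\pm1}$, $w_i$ ($1\le i\le N$) with relations: $w$'s commute, $X$'s commute, $X_iX_i^{-1}=X_i^{-1}X_i=1$, Coxeter relations of $\mathfrak S_N$ for the $s_i$ ($s_{ij}$ = transposition $(ij)$), $s_iw_i=w_{i+1}s_i-\mathbf t$, $s_iw_{i+1}=w_is_i+\mathbf t$, $s_iw_j=w_js_i$ ($j\ne i,i+1$), $\sigma X_i^{\pm1}=X_{\sigma(i)}^{\pm1}\sigma$, $[w_i,X_j]=-\mathbf tX_js_{ji}$ ($i>j$), $-\mathbf tX_is_{ij}$ ($i<j$), $[w_i,X_i]=-\hbar X_i+\mathbf t\sum_{k<i}X_ks_{ki}+\mathbf t\sum_{k>i}X_is_{ik}$. Let $l\ge1$, $\varepsilon$ a primitive $l$-th root of unity, $c_1,\dots,c_{l-1}$ indeterminates, $z_k=-l^{-1}\big((l-k)\hbar+\sum_{m=1}^{l-1}(1+\varepsilon^m+\dots+\varepsilon^{(k-1)m})c_m\big)$, and define $Y_i=\prod_{k=1}^l\big(w_i-\hbar-z_k+\mathbf t\sum_{j>i}s_{ij}\big)X_i^{-1}\in\mathbf H^{\mathrm{gr}}_N[c_1,\dots,c_{l-1}]$ (factors ordered $k=1,\dots,l$ left to right; this is the image of $e_\Gamma(l^{-1}\eta_i)^le_\Gamma$ under Oblomkov's embedding of the partially symmetrized cyclotomic rational Cherednik algebra). Representation: on $P=\mathbb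 C[\hbar,\mathbf t,c_1,\dots,c_{l-1}][w_1,\dots,w_N]$, $w_i$ acts by multiplication; $s_i$ ($1\le i\le N-1$) acts by $s_i^w+\frac{\mathbf t}{w_i-w_{i+1}}(s_i^w-1)$, where $s_i^w$ swaps the variables $w_i,w_{i+1}$; let $\pi$ be the operator $(\pi g)(w_1,\dots,w_N)=g(w_2,\dots,w_N,w_1+\hbar)$; $X_1$ acts by $\pi s_{N-1}\cdots s_1$ (with $s_i$ the operators above), $X_{i+1}=s_iX_is_i$, and $X_i^{-1}$ acts by the inverse operator. For $\lambda\in\mathbb Z^N$ let $\mathsf u^\lambda$ be the shift operator $(\mathsf u^\lambda g)(w)=g(w_1+\lambda_1\hbar,\dots,w_N+\lambda_N\hbar)$, $\mathsf u_i=\mathsf u^{\varepsilon_i}$. Every element acts by an operator $\sum_{\lambda,\sigma}g_{\lambda,\sigma}\mathsf u^\lambda\sigma$ ($\sigma\in\mathfrak S_N$ permuting variables, $g_{\lambda,\sigma}$ rational functions in $w$), and $\operatorname{Res}$ of it, i.e. its restriction to symmetric polynomials, is the difference operator $\sum_\lambda(\sum_\sigma g_{\lambda,\sigma})\mathsf u^\lambda$. Order: on $P_{\mathrm{wt}}=\bigoplus_i\mathbb Z\varepsilon_i$, $\lambda\le\mu$ iff $\mu-\lambda\in\sum_{i<j}\mathbb Z_{\ge0}(\varepsilon_i-\varepsilon_j)$; $\lambda^+$ is the unique dominant (nonincreasing coordinates) element of the $\mathfrak S_N$-orbit of $\lambda$; $\lambda\lessdot\mu$ iff $\lambda^+<\mu^+$,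 or $\lambda^+=\mu^+$ and $\lambda>\mu$. The leading term of a difference operator $\sum_\lambda g_\lambda\mathsf u^\lambda$ is $g_{\lambda_0}\mathsf u^{\lambda_0}$ where $g_{\lambda_0}\ne0$ and every other $\lambda$ with $g_\lambda\neq0$ satisfies $\lambda\lessdot\lambda_0$. *)

From HB Require Import structures.
From mathcomp Require Import all_boot all_order all_algebra all_fingroup all_field.
From mathcomp Require Import mpoly.

Set Implicit Arguments.
Unset Strict Implicit.
Unset Printing Implicit Defensive.

Import Order.TTheory GRing.Theory Num.Theory.
Local Open Scope ring_scope.

(* Setting.  N = n.+1 (so N >= 1), l >= 1.  All rational functions live in    *)
(*   K = algC(w_1..w_N, hbar, t, c_1..c_{l-1})                                *)
(* realised as the fraction field of {mpoly algC[N + l.+1]}: variable         *)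
(* (lshift i) is w_(i+1) (0-based i), (rshift N 0) is hbar, (rshift N 1) is t *)
(* and (rshift N m.+1) is c_m (1 <= m <= l-1).                                *)
(* An operator  sum g_{lambda,sigma} u^lambda sigma  is represented by a      *)
(* finite list of terms (g, p, a) with g in K, p a permutation of 'I_N and    *)
(* a in Z^N; the term acts on f in K by                                       *)
(*        f  |->  g * f[w_k := w_(p k) + a_k hbar]                            *)
(* (i.e. it is g u^lambda sigma with sigma = (f |-> f[w_k := w_(p k)]) and    *)

Section Ops.
Variables (n l : nat).
Local Notation N := n.+1.

Definition nv := (N + l.+1)%N.
Definition Pol := {mpoly algC[nv]}.
Definition Kf := {fraction Pol}.

Definition tof (p : Pol) : Kf := FracField.tofrac p.

Definition wP (i : 'I_N) : Pol := 'X_(lshift l.+1 i).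
Definition hP : Pol := 'X_(rshift N (ord0 : 'I_l.+1)).
Definition tP : Pol := 'X_(rshift N (inord 1 : 'I_l.+1)).
Definition cP (m : nat) : Pol := 'X_(rshift N (inord m.+1 : 'I_l.+1)).

Definition w (i : 'I_N) : Kf := tof (wP i).
Definition hb : Kf := tof hP.
Definition tt_ : Kf := tof tP.
Definition cc (m : nat) : Kf := tof (cP m).
Definition cstC (x : algC) : Kf := tof (x%:MP).

Definition wt := {ffun 'I_N -> int}.

Definition subst_img (p : {perm 'I_N}) (a : wt) (k : 'I_nv) : Pol :=
  match split k with
  | inl i => wP (p i) + (a i)%:~R * hP
  | inr _ => 'X_k
  end.
Definition substP (p : {perm 'I_N}) (a : wt) (q : Pol) : Pol :=
  q \mPo [tuple subst_img p a k | k < nv].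
Definition substK (p : {perm 'I_N}) (a : wt) (x : Kf) : Kf :=
  tof (substP p a (\n_(generic_quotient.repr x))) / tof (substP p a (\d_(generic_quotient.repr x))).

Definition term := (Kf * {perm 'I_N} * wt)%type.
Definition tc (x : term) : Kf := x.1.1.
Definition tp (x : term) : {perm 'I_N} := x.1.2.
Definition ta (x : term) : wt := x.2.
Definition Op := seq term.

Definition wt0 : wt := [ffun => 0].

Definition mulT (x y : term) : term :=
  (tc x * substK (tp x) (ta x) (tc y), (tp y * tp x)%g,
   [ffun k => ta x (tp y k) + ta y k]).
Definition mulO (A B : Op) : Op := [seq mulT x y | x <- A, y <- B].
Definition addO (A B : Op) : Op := A ++ B.
Definition scaleO (c : Kf) (A : Op) : Op := [seq (c * tc x, tp x, ta x) | x <- A].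
Definition constO (c : Kf) : Op := [:: (c, 1%g, wt0)].
Definition oneO : Op := constO 1.
Definition prodO (s : seq Op) : Op := foldr mulO oneO s.

(* s_(k+1) (paper numbering) = sop k, acting by
   s^w + t/(w_(k+1) - w_(k+2)) (s^w - 1) *)
Definition sop (k : nat) : Op :=
  let i : 'I_N := inord k in let j : 'I_N := inord k.+1 in
  let a := tt_ / (w i - w j) in
  [:: (1 + a, tperm i j, wt0); (- a, 1%g, wt0)].

(* pi : g(w_1..w_N) |-> g(w_2,..,w_N,w_1+hbar), and its inverse *)
Definition cycP : {perm 'I_N} := perm (can_inj (@ordSK N)).
Definition cycinvP : {perm 'I_N} := perm (can_inj (@ord_predK N)).
Definition piO : Op := [:: (1, cycP, [ffun k => ((k == ord_max) : nat)%:Z])].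
Definition piinvO : Op :=
  [:: (1, cycinvP, [ffun k => - ((k == ord0) : nat)%:Z])].

(* X_(k+1) (paper numbering) = Xop k *)
Definition X0 : Op := mulO piO (prodO [seq sop k | k <- rev (iota 0 n)]).
Fixpoint Xop (k : nat) : Op :=
  if k is k'.+1 then mulO (sop k') (mulO (Xop k') (sop k')) else X0.

(* X_(k+1)^-1 = Xinvop k  (the inverse operators; uses s_i^2 = 1) *)
Definition Xinv0 : Op := mulO (prodO [seq sop k | k <- iota 0 n]) piinvO.
Fixpoint Xinvop (k : nat) : Op :=
  if k is k'.+1 then mulO (sop k') (mulO (Xinvop k') (sop k')) else Xinv0.

(* transposition s_(i+1, i+d+2) (paper numbering) *)
Fixpoint stp (i d : nat) : Op :=
  if d is d'.+1 then mulO (sop i) (mulO (stp i.+1 d') (sop i)) else sop i.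
(* sum_{j > i+1} s_{i+1, j}  (paper numbering) *)
Definition sumS (i : nat) : Op := flatten [seq stp i d | d <- iota 0 (n - i)].

Variable eps : algC.

Definition zk (kap : nat) : Kf :=
  - (l%:R)^-1 * ((l - kap)%:R * hb +
      \sum_(1 <= m < l) cstC (\sum_(r < kap) eps ^+ (r * m)) * cc m).

(* Y_(i+1) (paper numbering) = Yop i *)
Definition Yfactor (i : 'I_N) (kap : nat) : Op :=
  addO (constO (w i - hb - zk kap)) (scaleO tt_ (sumS i)).
Definition Yop (i : 'I_N) : Op :=
  mulO (prodO [seq Yfactor i kap | kap <- iota 1 l]) (Xinvop i).

(* Res: coefficient of u^lambda in Res of an operator *)
Definition lam (x : term) : wt := [ffun j => ta x ((tp x)^-1 j)%g].
Definition resc (A : Op) (lambda : wt) : Kf :=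
  \sum_(x <- A | lam x == lambda) tc x.

Definition ew (i : 'I_N) : wt := [ffun j => ((j == i) : nat)%:Z].
Definition ewinv (i : 'I_N) : wt := [ffun j => - ((j == i) : nat)%:Z].

Definition wle (lambda mu : wt) : Prop :=
  exists c : 'I_N -> 'I_N -> nat, forall k : 'I_N,
    mu k - lambda k =
    \sum_(i < N) \sum_(j < N | (i < j)%N)
       (c i j)%:Z * (((k == i) : nat)%:Z - ((k == j) : nat)%:Z).
Definition wlt (lambda mu : wt) : Prop := wle lambda mu /\ lambda <> mu.
Definition dominant (nu : wt) : Prop := forall i j : 'I_N, (i <= j)%N -> nu j <= nu i.
Definition dom_of (lambda nu : wt) : Prop :=
  dominant nu /\ exists s : {perm 'I_N}, forall k, nu k = lambda (s k).
Definition lessdot (lambda mu : wt) : Prop :=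
  exists lp mp, dom_of lambda lp /\ dom_of mu mp /\
    (wlt lp mp \/ (lp = mp /\ wlt mu lambda)).

Definition leading (A : Op) (lambda0 : wt) (g0 : Kf) : Prop :=
  resc A lambda0 = g0 /\ g0 != 0 /\
  forall lambda, lambda != lambda0 -> resc A lambda != 0 -> lessdot lambda lambda0.

End Ops.

(* Everything is computed on coefficient functions of difference operators.
   Since every s_k fixes the symmetric functions, Res X_(k+1) is obtained by
   applying s_k, ..., s_1 to Res pi = u_1, and Res X_(i+1)^-1 by applying
   s_(i+1), ..., s_(N-1) to Res pi^-1 = u_N^-1.  A Demazure-Lusztig operator s_k
   maps a combination of the u_j (resp. u_j^-1) to another one: it mixes the
   coefficients at j = k, k+1 and leaves the others unchanged.  Hence the support
   grows by one index at each step, and the new extreme coefficient is the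
   previous one (with w_k and w_(k+1) swapped) times 1 + t / (w_k - w_(k+1)).  For Y_i, each factor
   w_i - hbar - z_k + t sum_(j > i) s_(i,j) commutes past s_i, ..., s_(N-1) and
   becomes multiplication by w_N - hbar - z_k.  So Res Y_i is computed like
   Res X_i^-1, with the scalar prod_k (w_N - hbar - z_k) carried along.  All the
   u_j (resp. u_j^-1) lie in one S_N-orbit, where the order reduces to a single
   positive root e_a - e_b. *)

From HB Require Import structures.
From mathcomp Require Import all_boot all_order all_algebra all_fingroup all_field.
From mathcomp Require Import mpoly ring.
From Stdlib Require Import FunctionalExtensionality.
Import Order.TTheory GRing.Theory Num.Theory.

Set Implicit Arguments.
Unset Strict Implicit.
Unset Printing Implicit Defensive.

Local Open Scope ring_scope.
Local Notation repr := generic_quotient.repr.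

Lemma add1_divr (F : fieldType) (x t : F) : x != 0 -> 1 + t / x = (x + t) / x.
Proof. by move=> x0; rewrite mulrDl divff. Qed.

Lemma add1_divrN (F : fieldType) (x t : F) : x != 0 -> 1 + t / x = (- x - t) / - x.
Proof. by move=> x0; rewrite invrN -opprD mulrNN add1_divr. Qed.

Section FracMap.
Variables R S : idomainType.
Local Notation "x %:F" := (@tofrac _ x).

Lemma tofrac_repr (x : {fraction R}) : x = (\n_(repr x))%:F / (\d_(repr x))%:F.
Proof.
rewrite -[x in LHS]generic_quotient.reprK -[repr x in LHS]Ratio_numden.
set u := \n_(repr x); set v := \d_(repr x).
have v0 : v != 0 by apply: denom_ratioP.
have -> : Ratio u v = FracField.mulf (Ratio u 1) (FracField.invf (Ratio v 1)).
  rewrite /FracField.mulf /FracField.invf !numden_Ratio ?oner_eq0 //.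
  by rewrite mulr1 mul1r.
by rewrite FracField.pi_mul FracField.pi_inv; unlock FracField.tofrac.
Qed.

Definition fracmap (f : R -> S) (x : {fraction R}) : {fraction S} :=
  (f \n_(repr x))%:F / (f \d_(repr x))%:F.

Lemma eq_fracmap (f g : R -> S) : f =1 g -> fracmap f =1 fracmap g.
Proof. by move=> fg x; rewrite /fracmap !fg. Qed.

Variables (f : {rmorphism R -> S}) (f_inj : injective f).

Let fneq0 (v : R) : v != 0 -> (f v)%:F != 0.
Proof. by rewrite tofrac_eq0 -(rmorph0 f) (inj_eq f_inj). Qed.

Lemma fracmap_frac (x : {fraction R}) (u v : R) : v != 0 -> x = u%:F / v%:F ->
  fracmap f x = (f u)%:F / (f v)%:F.
Proof.
move=> v0 xE; have d0 := denom_ratioP (repr x).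
have : \n_(repr x) * v = u * \d_(repr x).
  apply/eqP; rewrite -(tofrac_eq (R := R)) !tofracM -eqr_div ?tofrac_eq0 //.
  by rewrite -tofrac_repr -xE.
move=> E; apply/eqP; rewrite eqr_div ?fneq0 //.
by rewrite -!tofracM -!rmorphM E.
Qed.

Lemma fracmap_tofrac (u : R) : fracmap f u%:F = (f u)%:F.
Proof.
by rewrite (@fracmap_frac _ u 1) ?oner_eq0 ?rmorph1 ?tofrac1 ?divr1.
Qed.

Lemma fracmap_is_zmod_morphism : zmod_morphism (fracmap f).
Proof.
move=> x y; have dx := denom_ratioP (repr x); have dy := denom_ratioP (repr y).
rewrite (@fracmap_frac (x - y) (\n_(repr x) * \d_(repr y) - \n_(repr y) * \d_(repr x))
  (\d_(repr x) * \d_(repr y))) ?mulf_neq0 //; last first.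
  rewrite [x in LHS]tofrac_repr [y in LHS]tofrac_repr -mulNr addf_div ?tofrac_eq0 //.
  by rewrite tofracB !tofracM mulNr.
by rewrite /fracmap -[in RHS]mulNr addf_div ?fneq0 // !rmorphB !rmorphM mulNr.
Qed.

Lemma fracmap_is_monoid_morphism : monoid_morphism (fracmap f).
Proof.
split; first by rewrite -tofrac1 fracmap_tofrac rmorph1.
move=> x y; have dx := denom_ratioP (repr x); have dy := denom_ratioP (repr y).
rewrite (@fracmap_frac (x * y) (\n_(repr x) * \n_(repr y))
  (\d_(repr x) * \d_(repr y))) ?mulf_neq0 //; last first.
  by rewrite [x in LHS]tofrac_repr [y in LHS]tofrac_repr mulf_div !rmorphM.
by rewrite /fracmap mulf_div !rmorphM.
Qed.

End FracMap.

Lemma fracmap_comp (R : idomainType) (f g : {rmorphism R -> R}) (h : R -> R) :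
  injective f -> injective g -> h =1 f \o g ->
  forall x, fracmap f (fracmap g x) = fracmap h x.
Proof.
move=> f_inj g_inj hE x; have d0 := denom_ratioP (repr x).
rewrite (fracmap_frac f_inj (u := g \n_(repr x)) (v := g \d_(repr x))) //.
  by rewrite /fracmap !hE.
by rewrite -(rmorph0 g) (inj_eq g_inj).
Qed.

Lemma fracmap_id (R : idomainType) (x : {fraction R}) : fracmap id x = x.
Proof. by rewrite /fracmap -tofrac_repr. Qed.

Lemma comp_mpolyA (m : nat) (R : comNzRingType) (k j : nat) (p : {mpoly R[m]})
    (lq : m.-tuple {mpoly R[k]}) (lr : k.-tuple {mpoly R[j]}) :
  (p \mPo lq) \mPo lr = p \mPo [tuple tnth lq i \mPo lr | i < m].
Proof.
rewrite [p \mPo lq]comp_mpolyEX [RHS]comp_mpolyEX raddf_sum /=; apply: eq_bigr => mu _.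
rewrite comp_mpolyZ !comp_mpolyX rmorph_prod; congr (_ *: _).
by apply: eq_bigr => i _; rewrite rmorphXn tnth_map tnth_ord_tuple.
Qed.

Section Substitution.
Variables n l : nat.
Local Notation N := n.+1.
Local Notation Kf := (Kf n l).
Local Notation wt := (wt n).
Local Notation subst_img := (@subst_img n l).
Local Notation substP := (@substP n l).
Local Notation substK := (@substK n l).
Local Notation substT p a := [tuple subst_img p a k | k < nv n l].

Lemma split_lshift (i : 'I_N) : split (lshift l.+1 i) = inl i.
Proof. by rewrite -[lshift _ _]/(unsplit (inl i)) unsplitK. Qed.

Lemma split_rshift (j : 'I_l.+1) : split (rshift N j) = inr j.
Proof. by rewrite -[rshift _ _]/(unsplit (inr j)) unsplitK. Qed.

HB.instance Definition _ p a :=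
  GRing.RMorphism.copy (substP p a) (comp_mpoly (substT p a)).

Lemma substP_X p a k : substP p a 'X_k = subst_img p a k.
Proof. by rewrite /substP comp_mpolyXU -tnth_nth tnth_mktuple. Qed.

Lemma substP_rshift p a j : substP p a 'X_(rshift N j) = 'X_(rshift N j).
Proof. by rewrite substP_X /subst_img split_rshift. Qed.

Lemma substP_wP p a i : substP p a (wP l i) = wP l (p i) + (a i)%:~R * hP n l.
Proof. by rewrite substP_X /subst_img split_lshift. Qed.

Definition wcomp (p : {perm 'I_N}) (a : wt) (q : {perm 'I_N}) (b : wt) : wt :=
  [ffun k => a (q k) + b k].

Lemma substP_comp p a q b x :
  substP p a (substP q b x) = substP (q * p)%g (wcomp p a q b) x.
Proof.
rewrite {1}/substP comp_mpolyA; congr (_ \mPo _); apply: eq_from_tnth => k.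
rewrite !tnth_mktuple -/(substP p a _) /subst_img; case E: (split k) => [i|j].
  rewrite rmorphD rmorphM /= substP_wP rmorph_int substP_rshift permM ffunE.
  by rewrite intrD mulrDl addrA.
by rewrite substP_X /subst_img E.
Qed.

Lemma substP_id x : substP 1%g [ffun => 0] x = x.
Proof.
rewrite /substP -[RHS]comp_mpoly_id; congr (_ \mPo _); apply: eq_from_tnth => k.
rewrite !tnth_mktuple /subst_img; case E: (split k) => [i|j] //.
by rewrite ffunE mul0r addr0 perm1 /wP -[k]splitK E.
Qed.

Lemma substP_inj p a : injective (substP p a).
Proof.
apply: (can_inj (g := substP (p^-1)%g [ffun j => - a ((p^-1)%g j)])) => x.
rewrite substP_comp mulgV -[RHS]substP_id; congr substP.
by apply/ffunP => k; rewrite !ffunE permK addNr.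
Qed.

HB.instance Definition _ p a := GRing.isZmodMorphism.Build Kf Kf (substK p a)
  (fracmap_is_zmod_morphism (f := comp_mpoly (substT p a)) (@substP_inj p a)).
HB.instance Definition _ p a := GRing.isMonoidMorphism.Build Kf Kf (substK p a)
  (fracmap_is_monoid_morphism (f := comp_mpoly (substT p a)) (@substP_inj p a)).

Lemma substK_tof p a q : substK p a (tof q) = tof (substP p a q).
Proof. exact: (fracmap_tofrac (f := comp_mpoly (substT p a)) (@substP_inj p a)). Qed.

Lemma substK_comp p a q b x :
  substK p a (substK q b x) = substK (q * p)%g (wcomp p a q b) x.
Proof.
apply: (fracmap_comp (f := comp_mpoly (substT p a)) (g := comp_mpoly (substT q b)));
  [exact: substP_inj | exact: substP_inj | move=> y; exact/esym/substP_comp].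
Qed.

Lemma substK_id x : substK 1%g [ffun => 0] x = x.
Proof. by rewrite -[RHS]fracmap_id; apply: eq_fracmap; exact: substP_id. Qed.

End Substitution.

Section Generators.
Variables (n l : nat) (eps : algC).
Local Notation N := n.+1.
Local Notation substK := (@substK n l).
Local Notation w := (@w n l).
Local Notation hb := (hb n l).
Local Notation tt_ := (tt_ n l).

Lemma substK_w p a i : substK p a (w i) = w (p i) + (a i)%:~R * hb.
Proof. by rewrite substK_tof substP_wP /tof rmorphD rmorphM rmorph_int. Qed.

Lemma substK_w0 p i : substK p (wt0 n) (w i) = w (p i).
Proof. by rewrite substK_w ffunE mul0r addr0. Qed.

Lemma substK_hb p a : substK p a hb = hb.
Proof. by rewrite substK_tof substP_rshift. Qed.

Lemma substK_tt p a : substK p a tt_ = tt_.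
Proof. by rewrite substK_tof substP_rshift. Qed.

Lemma substK_zk p a k : substK p a (zk n l eps k) = zk n l eps k.
Proof.
rewrite rmorphM rmorphN fmorphV !rmorph_nat rmorphD rmorphM rmorph_nat /= substK_hb.
rewrite rmorph_sum; congr (_ * (_ + _)); apply: eq_bigr => m _.
by rewrite rmorphM /= !substK_tof substP_rshift /substP comp_mpolyC.
Qed.

Lemma hb_neq0 : hb != 0.
Proof.
rewrite tofrac_eq0; apply/eqP => /(congr1 (meval (fun m => (m == rshift N ord0)%:R))).
by rewrite mevalXU eqxx meval0 => /eqP; rewrite oner_eq0.
Qed.

Lemma substK_shift_neq0 p a x : substK p a x = x + hb -> x != 0.
Proof.
move=> xE; apply/eqP => x0; move: xE; rewrite x0 rmorph0 add0r => /esym/eqP.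
by rewrite (negPf hb_neq0).
Qed.

Lemma w_subr_addr_neq0 (i j : 'I_N) c : i != j -> substK 1%g (ew i) c = c ->
  w i - w j + c != 0.
Proof.
move=> ij cE; apply: (@substK_shift_neq0 1%g (ew i)).
rewrite !rmorphD rmorphN /= cE !substK_w !perm1 !ffunE eqxx eq_sym (negPf ij) mul1r mul0r.
by rewrite addr0; ring.
Qed.

Lemma w_subr_neq0 (i j : 'I_N) : i != j -> w i - w j != 0.
Proof. by move=> ij; rewrite -[_ - _]addr0 w_subr_addr_neq0 ?rmorph0. Qed.

Lemma w_subr_addt_neq0 (i j : 'I_N) : i != j -> w i - w j + tt_ != 0.
Proof. by move=> ij; rewrite w_subr_addr_neq0 ?substK_tt. Qed.

Lemma w_subr_subt_neq0 (i j : 'I_N) : i != j -> w i - w j - tt_ != 0.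
Proof. by move=> ij; rewrite w_subr_addr_neq0 // rmorphN /= substK_tt. Qed.

Lemma w_subr_hb_zk_neq0 (i : 'I_N) k : w i - hb - zk n l eps k != 0.
Proof.
apply: (@substK_shift_neq0 1%g (ew i)).
by rewrite !rmorphB /= substK_zk substK_hb substK_w ffunE eqxx perm1 mul1r; ring.
Qed.

End Generators.

Section Action.
Variables n l : nat.
Local Notation Kf := (Kf n l).
Local Notation wt := (wt n).
Local Notation term := (term n l).
Local Notation Op := (Op n l).
Local Notation substK := (@substK n l).
Local Notation wt0 := (wt0 n).

(* A difference operator [D = sum_mu R mu u^mu] is represented by its coefficient
   function [R], and [act A R] is the coefficient function of [Res (A D)]; thus
   [resc A = act A (delta wt0)], and [act] turns products of operators into
   composition. *)
Definition dop := wt -> Kf.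

Definition delta (lambda : wt) : dop := fun mu => if mu == lambda then 1 else 0.

Definition shift_wt (x : term) (mu : wt) : wt := [ffun k => mu (tp x k) - ta x k].

Definition act_term (x : term) (R : dop) : dop :=
  fun mu => tc x * substK (tp x) (ta x) (R (shift_wt x mu)).

Definition act (A : Op) (R : dop) : dop := fun mu => \sum_(x <- A) act_term x R mu.

Lemma shift_wt_eq0 x mu : (shift_wt x mu == wt0) = (lam x == mu).
Proof.
apply/eqP/eqP => [xmu | <-]; last by apply/ffunP => k; rewrite !ffunE permK subrr.
apply/ffunP => j; have /eqP := congr1 (fun f : wt => f ((tp x)^-1 j)%g) xmu.
by rewrite !ffunE permKV subr_eq0 => /eqP.
Qed.

Lemma resc_act A : resc A =1 act A (delta wt0).
Proof.
move=> mu; rewrite /resc big_mkcond; apply: eq_bigr => x _.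
by rewrite /act_term /delta shift_wt_eq0; case: eqP; rewrite ?rmorph1 ?rmorph0 ?mulr1 ?mulr0.
Qed.

Lemma act_mulO A B R : act (mulO A B) R = act A (act B R).
Proof.
apply: functional_extensionality => mu.
rewrite /act /mulO big_allpairs_dep; apply: eq_bigr => x _.
rewrite /act_term rmorph_sum mulr_sumr; apply: eq_bigr => y _.
rewrite rmorphM /= substK_comp mulrA; congr (_ * substK _ _ (R _)).
by apply/ffunP => k; rewrite !ffunE permM opprD addrA.
Qed.

Lemma act_cat A B R mu : act (A ++ B) R mu = act A R mu + act B R mu.
Proof. exact: big_cat. Qed.

Lemma act_flatten (As : seq Op) R mu : act (flatten As) R mu = \sum_(A <- As) act A R mu.
Proof. exact: big_flatten. Qed.

Lemma act_scaleO c A R mu : act (scaleO c A) R mu = c * act A R mu.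
Proof. by rewrite /act big_map mulr_sumr; apply: eq_bigr => x _; rewrite /act_term mulrA. Qed.

Lemma act_constO c R mu : act (constO c) R mu = c * R mu.
Proof.
rewrite /act big_seq1 /act_term /= substK_id; congr (_ * R _).
by apply/ffunP => k; rewrite !ffunE perm1 subr0.
Qed.

Lemma act_oneO R : act (oneO n l) R = R.
Proof. by apply: functional_extensionality => mu; rewrite act_constO mul1r. Qed.

Lemma act_add A R1 R2 mu : act A (fun nu => R1 nu + R2 nu) mu = act A R1 mu + act A R2 mu.
Proof.
by rewrite /act -big_split; apply: eq_bigr => x _; rewrite /act_term rmorphD mulrDr.
Qed.

Lemma act_sum A (I : Type) (r : seq I) (F : I -> dop) mu :
  act A (fun nu => \sum_(i <- r) F i nu) mu = \sum_(i <- r) act A (F i) mu.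
Proof.
rewrite /act exchange_big; apply: eq_bigr => x _.
by rewrite /act_term rmorph_sum mulr_sumr.
Qed.

End Action.

Section DemazureLusztig.
Variables n l : nat.
Local Notation N := n.+1.
Local Notation Kf := (Kf n l).
Local Notation wt := (wt n).
Local Notation substK := (@substK n l).
Local Notation w := (@w n l).
Local Notation tt_ := (tt_ n l).
Local Notation wt0 := (wt0 n).
Local Notation act := (@act n l).
Local Notation delta := (@delta n l).

Definition ik k : 'I_N := inord k.
Definition jk k : 'I_N := inord k.+1.
Definition tk k := tperm (ik k) (jk k).
Definition sw k (mu : wt) : wt := [ffun m => mu (tk k m) - wt0 m].
Definition ak k := tt_ / (w (ik k) - w (jk k)).
Definition S k := act (sop n l k).
Local Notation sg k := (substK (tk k) wt0).

Lemma ik_val k : (k <= n)%N -> val (ik k) = k.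
Proof. exact: (@inordK n k). Qed.

Lemma jk_val k : (k < n)%N -> val (jk k) = k.+1.
Proof. exact: (@inordK n k.+1). Qed.

Lemma ik_neq_jk k : (k < n)%N -> ik k != jk k.
Proof.
by move=> kn; apply/eqP => /(congr1 val); rewrite ik_val ?jk_val ?(ltnW kn) //; apply: n_Sn.
Qed.

Lemma tk_ik k : tk k (ik k) = jk k. Proof. exact: tpermL. Qed.

Lemma tk_jk k : tk k (jk k) = ik k. Proof. exact: tpermR. Qed.

Lemma S_E k R mu : S k R mu = (1 + ak k) * sg k (R (sw k mu)) - ak k * R mu.
Proof.
rewrite /S /act /sop big_cons big_seq1 /act_term /= substK_id mulNr; congr (_ - _ * R _).
by apply/ffunP => m; rewrite !ffunE perm1 subr0.
Qed.

Lemma sg_involutive k : involutive (sg k).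
Proof.
move=> x; rewrite substK_comp -[RHS]substK_id.
have -> : (tk k * tk k)%g = 1%g by apply/permP => m; rewrite permM tpermK perm1.
congr (substK _ _ x).
by apply/ffunP => m; rewrite !ffunE addr0.
Qed.

Lemma sw_involutive k : involutive (sw k).
Proof. by move=> mu; apply/ffunP => m; rewrite !ffunE tpermK !subr0. Qed.

Lemma sg_w k (j : 'I_N) : sg k (w j) = w (tk k j).
Proof. exact: substK_w0. Qed.

Lemma sg_ak k : sg k (ak k) = - ak k.
Proof.
rewrite rmorphM fmorphV rmorphB /= !sg_w substK_tt tk_ik tk_jk.
by rewrite -opprB invrN mulrN.
Qed.

Lemma S_involutive k R : S k (S k R) = R.
Proof.
have sgE (a x y : Kf) : sg k ((1 + a) * x - a * y) = (1 + sg k a) * sg k x - sg k a * sg k y.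
  by rewrite rmorphB !rmorphM rmorphD rmorph1.
apply: functional_extensionality => mu.
by rewrite !S_E sw_involutive sgE sg_involutive sg_ak; ring.
Qed.

Lemma S_mulw k R mu : (k < n)%N ->
  S k (fun nu => w (jk k) * R nu) mu = w (ik k) * S k R mu + tt_ * R mu.
Proof.
move=> kn; rewrite !S_E rmorphM /= sg_w tk_jk.
have <- : ak k * (w (ik k) - w (jk k)) = tt_ by rewrite divfK // w_subr_neq0 ?ik_neq_jk.
ring.
Qed.

Lemma S_scale k c R mu : sg k c = c -> S k (fun nu => c * R nu) mu = c * S k R mu.
Proof. by move=> cE; rewrite !S_E rmorphM /= cE; ring. Qed.

Lemma S_delta0 k : S k (delta wt0) = delta wt0.
Proof.
apply: functional_extensionality => mu; rewrite S_E.
have -> : delta wt0 (sw k mu) = delta wt0 mu.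
  have sw0 : sw k wt0 = wt0 by apply/ffunP => m; rewrite !ffunE subr0.
  rewrite /delta; congr (if _ then _ else _); apply/eqP/eqP => [mu0|->//].
  by rewrite -[mu](sw_involutive k) mu0.
by rewrite /delta; case: (mu == wt0); rewrite ?rmorph1 ?rmorph0 /=; ring.
Qed.

End DemazureLusztig.

Section Operators.
Variables (n l : nat) (eps : algC).
Local Notation N := n.+1.
Local Notation substK := (@substK n l).
Local Notation w := (@w n l).
Local Notation hb := (hb n l).
Local Notation tt_ := (tt_ n l).
Local Notation wt0 := (wt0 n).
Local Notation zk := (zk n l eps).
Local Notation act := (@act n l).
Local Notation dop := (dop n l).
Local Notation delta := (@delta n l).
Local Notation S := (@S n l).

Fixpoint Sprod (m i : nat) (R : dop) : dop :=
  if m is m'.+1 then S i (Sprod m' i.+1 R) else R.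

Lemma act_prod_sop i m R : act (prodO [seq sop n l j | j <- iota i m]) R = Sprod m i R.
Proof. by elim: m i => [|m IHm] i /=; rewrite ?act_oneO // act_mulO IHm. Qed.

Lemma act_prod_sop_delta0 (s : seq nat) :
  act (prodO [seq sop n l j | j <- s]) (delta wt0) = delta wt0.
Proof. by elim: s => [|j s IHs] /=; rewrite ?act_oneO // act_mulO IHs; apply: S_delta0. Qed.

Lemma act_single_delta0 (x : term n l) : tc x = 1 -> act [:: x] (delta wt0) = delta (lam x).
Proof.
move=> x1; apply: functional_extensionality => mu.
by rewrite -resc_act /resc big_mkcond big_seq1 x1 /delta eq_sym.
Qed.

Lemma act_piO : act (piO n l) (delta wt0) = delta (ew ord0).
Proof.
rewrite act_single_delta0 //; congr delta; apply/ffunP => j; rewrite !ffunE /=.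
have -> : (((cycP n)^-1)%g j == ord_max) = (j == ord0) => //.
rewrite -(inj_eq (@perm_inj _ (cycP n))) permKV permE; congr (_ == _).
by apply: val_inj; rewrite /= modnn.
Qed.

Lemma act_piinvO : act (piinvO n l) (delta wt0) = delta (ewinv ord_max).
Proof.
rewrite act_single_delta0 //; congr delta; apply/ffunP => j; rewrite !ffunE /=.
have -> : (((cycinvP n)^-1)%g j == ord0) = (j == ord_max) => //.
rewrite -(inj_eq (@perm_inj _ (cycinvP n))) permKV permE; congr (_ == _).
by apply: val_inj; rewrite /= modn_small.
Qed.

Fixpoint resX (k : nat) : dop := if k is k'.+1 then S k' (resX k') else delta (ew ord0).

Lemma act_Xop k : act (Xop n l k) (delta wt0) = resX k.
Proof.
elim: k => [|k IHk] /=; first by rewrite act_mulO act_prod_sop_delta0 act_piO.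
rewrite !act_mulO; change (S k (act (Xop n l k) (S k (delta wt0))) = S k (resX k)).
by rewrite S_delta0 IHk.
Qed.

Lemma act_Xinvop k : (k <= n)%N ->
  act (Xinvop n l k) (delta wt0) = Sprod (n - k) k (delta (ewinv ord_max)).
Proof.
elim: k => [|k IHk] kn /=; first by rewrite act_mulO act_piinvO act_prod_sop subn0.
rewrite !act_mulO; change (S k (act (Xinvop n l k) (S k (delta wt0))) =
  Sprod (n - k.+1) k.+1 (delta (ewinv ord_max))).
by rewrite S_delta0 IHk 1?ltnW // -(subnSK kn) /= S_involutive.
Qed.

Definition prodY k := \prod_(kap <- iota 1 l) (w (inord k) - hb - zk kap).

Definition Yfactor_act (i k : nat) (R : dop) : dop :=
  fun mu => (w (inord i) - hb - zk k) * R mu + tt_ * act (sumS n l i) R mu.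

Lemma act_Yfactor (i : 'I_N) k : act (Yfactor l eps i k) = Yfactor_act i k.
Proof.
do 2 apply: functional_extensionality => ?.
by rewrite act_cat act_constO act_scaleO /Yfactor_act inord_val.
Qed.

Lemma act_sumS i R mu :
  act (sumS n l i) R mu = \sum_(d <- iota 0 (n - i)) act (stp n l i d) R mu.
Proof. by rewrite act_flatten big_map. Qed.

(* In the paper's numbering: (sum_(j > i) s_ij) s_i = 1 + s_i (sum_(j > i+1) s_(i+1)j),
   because s_ij s_i = s_i s_(i+1)j for j > i + 1. *)
Lemma act_sumS_S i R mu : (i < n)%N ->
  act (sumS n l i) (S i R) mu = R mu + S i (act (sumS n l i.+1) R) mu.
Proof.
move=> iltn; rewrite act_sumS -(subnSK iltn) /= big_cons.
congr (_ + _); first exact: (congr1 (fun R => R mu) (S_involutive i R)).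
have -> : S i (act (sumS n l i.+1) R) =
    fun mu => \sum_(d <- iota 0 (n - i.+1)) S i (act (stp n l i.+1 d) R) mu.
  by apply: functional_extensionality => nu; rewrite -act_sum; congr act;
    apply: functional_extensionality => ?; rewrite act_sumS.
rewrite (iotaDl 1 0) big_map; apply: eq_bigr => d _ /=.
by rewrite !act_mulO; congr (act _ (act _ _) mu); apply: S_involutive.
Qed.

Lemma Yfactor_act_S i k R mu : (i < n)%N ->
  Yfactor_act i k (S i R) mu = S i (Yfactor_act i.+1 k R) mu.
Proof.
move=> iltn; rewrite /Yfactor_act.
set Q := act (sumS n l i.+1) R.
have -> : (fun nu => (w (inord i.+1) - hb - zk k) * R nu + tt_ * Q nu) =
    (fun nu => (fun nu => w (jk n i) * R nu) nu + (fun nu => - (hb + zk k) * R nu) nu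
      + (fun nu => tt_ * Q nu) nu).
  by apply: functional_extensionality => nu; rewrite /jk; ring.
have fix_hz : substK (tk n i) wt0 (- (hb + zk k)) = - (hb + zk k).
  by rewrite rmorphN rmorphD /= substK_hb substK_zk.
have S_add R1 R2 nu : S i (fun x => R1 x + R2 x) nu = S i R1 nu + S i R2 nu.
  exact: act_add.
rewrite !S_add S_mulw // !S_scale ?fix_hz ?substK_tt // act_sumS_S // -/Q /ik; ring.
Qed.

Lemma Yfactor_act_Sprod m i k R : (i + m <= n)%N ->
  Yfactor_act i k (Sprod m i R) = Sprod m i (Yfactor_act (i + m) k R).
Proof.
elim: m i R => [|m IHm] i R imn; first by rewrite addn0.
apply: functional_extensionality => mu; rewrite /= Yfactor_act_S; last first.
  by apply: leq_trans imn; rewrite -addSnnS leq_addr.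
by rewrite IHm ?addSnnS.
Qed.

Lemma Yfactor_act_n k R mu : Yfactor_act n k R mu = (w (inord n) - hb - zk k) * R mu.
Proof. by rewrite /Yfactor_act act_sumS subnn big_nil mulr0 addr0. Qed.

Lemma act_Yop (i : 'I_N) : act (Yop l eps i) (delta wt0) =
  Sprod (n - i) i (fun mu => prodY n * delta (ewinv ord_max) mu).
Proof.
rewrite act_mulO act_Xinvop ?leq_ord // /prodY; elim: (iota 1 l) => [|k s IHs] /=.
  rewrite act_oneO; congr Sprod; apply: functional_extensionality => mu.
  by rewrite big_nil mul1r.
rewrite act_mulO IHs act_Yfactor Yfactor_act_Sprod subnKC ?leq_ord //.
by congr Sprod; apply: functional_extensionality => mu; rewrite Yfactor_act_n big_cons mulrA.
Qed.

End Operators.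

Section Triangularity.
Variables (n l : nat).
Local Notation N := n.+1.
Local Notation Kf := (Kf n l).
Local Notation wt := (wt n).
Local Notation substK := (@substK n l).
Local Notation w := (@w n l).
Local Notation tt_ := (tt_ n l).
Local Notation wt0 := (wt0 n).
Local Notation dop := (dop n l).
Local Notation delta := (@delta n l).
Local Notation S := (@S n l).
Local Notation Sprod := (@Sprod n l).
Local Notation ik := (ik n).
Local Notation jk := (jk n).
Local Notation tk := (tk n).
Local Notation ak := (ak n l).
Local Notation sg k := (substK (tk k) wt0).
Local Notation resX := (@resX n l).

Definition comb (e : 'I_N -> wt) (c : 'I_N -> Kf) : dop :=
  fun mu => \sum_j (if mu == e j then c j else 0).

Section Comb.
Variables (e : 'I_N -> wt) (e_inj : injective e).

Lemma comb_at c j : comb e c (e j) = c j.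
Proof.
rewrite /comb (bigD1 j) //= eqxx big1 ?addr0 // => i ij.
by rewrite (inj_eq e_inj) eq_sym (negPf ij).
Qed.

Lemma comb_out c mu : (forall j, mu != e j) -> comb e c mu = 0.
Proof. by move=> mu_out; apply: big1 => j _; rewrite (negPf (mu_out j)). Qed.

Lemma comb_delta g j0 : comb e (fun j => if j == j0 then g else 0) =1 fun mu => g * delta (e j0) mu.
Proof.
move=> mu; rewrite /delta; have [-> | mu_out] := eqVneq mu (e j0).
  by rewrite comb_at eqxx mulr1.
rewrite mulr0; apply: big1 => j _.
by have [-> | _] := eqVneq j j0; [rewrite (negPf mu_out) | case: ifP].
Qed.

Lemma S_comb k c : (forall j, sw k (e j) = e (tk k j)) ->
  S k (comb e c) =1 comb e (fun j => (1 + ak k) * sg k (c (tk k j)) - ak k * c j).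
Proof.
move=> swE mu; rewrite S_E; have [j /eqP -> | mu_out] := pickP (fun j => mu == e j).
  by rewrite swE !comb_at.
have sw_out j : sw k mu != e j.
  by apply: contraFneq (mu_out (tk k j)) => swmu; rewrite -swE -swmu sw_involutive.
by rewrite !comb_out ?rmorph0 ?mulr0 ?subr0 // => j; rewrite mu_out.
Qed.

End Comb.

Lemma ew_inj : injective (@ew n).
Proof.
move=> i j /(congr1 (fun f : wt => f i)); rewrite !ffunE eqxx.
by case: eqP => // _ /eqP.
Qed.

Lemma ewinv_inj : injective (@ewinv n).
Proof.
move=> i j /(congr1 (fun f : wt => f i)); rewrite !ffunE eqxx.
by case: eqP => // _ /eqP.
Qed.

Lemma sw_ew k j : sw k (ew j) = ew (tk k j).
Proof. by apply/ffunP => m; rewrite !ffunE subr0 (canF_eq (tpermK _ _)). Qed.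

Lemma sw_ewinv k j : sw k (ewinv j) = ewinv (tk k j).
Proof. by apply/ffunP => m; rewrite !ffunE subr0 (canF_eq (tpermK _ _)). Qed.

Lemma tk_out k (j : 'I_N) : (k < n)%N -> val j != k -> val j != k.+1 -> tk k j = j.
Proof.
move=> kn jk_ne jk1_ne.
by apply: tpermD; rewrite -(inj_eq val_inj) ?ik_val ?jk_val ?(ltnW kn) // eq_sym.
Qed.

Definition leadX k := \prod_(j < N | (j < k)%N)
  ((w (inord k) - w j - tt_) / (w (inord k) - w j)).

Definition leadXinv i := \prod_(j < N | (i < j)%N)
  ((w (inord i) - w j + tt_) / (w (inord i) - w j)).

Lemma sg_leadX k : (k < n)%N -> (1 + ak k) * sg k (leadX k) = leadX k.+1.
Proof.
move=> kn; have ij := ik_neq_jk kn; have ikE := ik_val (ltnW kn); have jkE := jk_val kn.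
have -> : 1 + ak k = (w (jk k) - w (ik k) - tt_) / (w (jk k) - w (ik k)).
  by rewrite /ak add1_divrN ?w_subr_neq0 // opprB.
rewrite rmorph_prod /leadX [in RHS](bigD1 (ik k)) /=; last by rewrite ikE.
congr (_ * _); apply: eq_big => [j | j jltk].
  by rewrite -(inj_eq val_inj) ikE ltn_neqAle ltnS andbC.
rewrite rmorphM fmorphV !rmorphB /= substK_tt !sg_w (tk_out kn (j := j)).
- by rewrite tk_ik.
- by rewrite ltn_eqF.
- by rewrite ltn_eqF // ltnW.
Qed.

Lemma sg_leadXinv i : (i < n)%N -> (1 + ak i) * sg i (leadXinv i.+1) = leadXinv i.
Proof.
move=> iltn; have ij := ik_neq_jk iltn.
have ikE := ik_val (ltnW iltn); have jkE := jk_val iltn.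
have -> : 1 + ak i = (w (ik i) - w (jk i) + tt_) / (w (ik i) - w (jk i)).
  by rewrite /ak add1_divr ?w_subr_neq0.
rewrite rmorph_prod /leadXinv [in RHS](bigD1 (jk i)) /=; last by rewrite jkE.
congr (_ * _); apply: eq_big => [j | j ij'].
  by rewrite -(inj_eq val_inj) jkE /=; case: (ltngtP i.+1 j).
rewrite rmorphM fmorphV rmorphD !rmorphB /= substK_tt !sg_w (tk_out iltn (j := j)).
- by rewrite tk_jk.
- by rewrite gtn_eqF // ltnW.
- by rewrite gtn_eqF.
Qed.

Lemma resX_shape k : (k <= n)%N -> exists c, resX k =1 comb (@ew n) c /\
  (forall j : 'I_N, (k < j)%N -> c j = 0) /\ c (inord k) = leadX k.
Proof.
elim: k => [|k IHk] kn.
  exists (fun j => if j == ord0 then 1 else 0); split.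
    by move=> mu; rewrite (comb_delta ew_inj) mul1r.
  split=> [j j_gt0|]; first by rewrite ifN // -(inj_eq val_inj) /= -lt0n.
  have -> : inord 0 = ord0 :> 'I_N by apply: val_inj; rewrite /= inordK.
  by rewrite eqxx /leadX big_pred0.
have [c [cE [c_out c_k]]] := IHk (ltnW kn).
exists (fun j => (1 + ak k) * sg k (c (tk k j)) - ak k * c j); split.
  by move=> mu; rewrite /= (functional_extensionality _ _ cE) (S_comb ew_inj c (sw_ew k)).
split=> [j kj|].
  have jk_ne : val j != k by rewrite gtn_eqF // ltnW.
  by rewrite tk_out ?c_out ?rmorph0 ?mulr0 ?subr0 ?gtn_eqF // ltnW.
rewrite -/(jk k) tk_jk (c_out (jk k)); last by rewrite jk_val.
by rewrite mulr0 subr0 -sg_leadX // -c_k.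
Qed.

Lemma Sprod_shape (G : nat -> Kf) m i : (i + m)%N = n ->
  (forall k, (k < n)%N -> sg k (G k.+1) = G k) ->
  exists c, Sprod m i (fun mu => G n * delta (ewinv ord_max) mu) =1 comb (@ewinv n) c /\
    (forall j : 'I_N, (j < i)%N -> c j = 0) /\ c (inord i) = leadXinv i * G i.
Proof.
move=> + GE; elim: m i => [|m IHm] i imn.
  rewrite addn0 in imn; subst i.
  exists (fun j => if j == ord_max then G n else 0); split.
    by move=> mu; rewrite (comb_delta ewinv_inj).
  split=> [j jn|]; first by rewrite ifN // -(inj_eq val_inj) /= ltn_eqF.
  have -> : inord n = ord_max :> 'I_N by apply: val_inj; rewrite /= inordK.
  by rewrite eqxx /leadXinv big_pred0 ?mul1r // => j; rewrite ltnNge -ltnS ltn_ord.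
have iltn : (i < n)%N by rewrite -imn -addSnnS leq_addr.
have [c [cE [c_out c_i]]] := IHm i.+1 (etrans (addSnnS _ _) imn).
exists (fun j => (1 + ak i) * sg i (c (tk i j)) - ak i * c j); split.
  by move=> mu; rewrite /= (functional_extensionality _ _ cE) (S_comb ewinv_inj c (sw_ewinv i)).
split=> [j ji|].
  by rewrite tk_out ?c_out ?rmorph0 ?mulr0 ?subr0 ?ltn_eqF // leqW.
rewrite -/(ik i) tk_ik (c_out (ik i)); last by rewrite ik_val // ltnW.
by rewrite mulr0 subr0 c_i rmorphM mulrA sg_leadXinv //= GE.
Qed.

End Triangularity.

Section Order.
Variable n : nat.
Local Notation N := n.+1.
Local Notation wt := (wt n).

Lemma wle_pair (a b : 'I_N) (lambda mu : wt) : (a < b)%N ->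
  (forall k, mu k - lambda k = ((k == a) : nat)%:Z - ((k == b) : nat)%:Z) -> wle lambda mu.
Proof.
move=> ab muE; exists (fun x y => ((x == a) && (y == b)) : nat) => k.
rewrite muE (bigD1 a) //= [X in _ = _ + X]big1; last first.
  by move=> x xa; apply: big1 => y _; rewrite (negPf xa) mul0r.
rewrite (bigD1 b) //= [X in _ = _ + X + _]big1; last first.
  by move=> y /andP[_ yb]; rewrite (negPf yb) andbF mul0r.
by rewrite !eqxx mul1r !addr0.
Qed.

Lemma lessdot_same_dom (lambda mu nu : wt) :
  dom_of lambda nu -> dom_of mu nu -> wlt mu lambda -> lessdot lambda mu.
Proof. by move=> lnu mnu mlt; exists nu, nu; do 2!split => //; right. Qed.

Lemma dom_ew (j : 'I_N) : dom_of (ew j) (ew ord0).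
Proof.
split=> [x y xy|]; last first.
  by exists (tperm ord0 j) => k; rewrite !ffunE (canF_eq (tpermK _ _)) tpermR.
rewrite !ffunE lez_nat; case: (y =P ord0) => [y0|_] //.
suff -> : x == ord0 by [].
by rewrite -(inj_eq val_inj) /= -leqn0; move: xy; rewrite y0.
Qed.

Lemma dom_ewinv (j : 'I_N) : dom_of (ewinv j) (ewinv ord_max).
Proof.
split=> [x y xy|]; last first.
  by exists (tperm ord_max j) => k; rewrite !ffunE (canF_eq (tpermK _ _)) tpermR.
rewrite !ffunE lerN2 lez_nat; case: (x =P ord_max) => [xmax|_] //.
suff -> : y == ord_max by [].
by rewrite -(inj_eq val_inj) /= eqn_leq leq_ord; move: xy; rewrite xmax.
Qed.

Lemma lessdot_ew (i j : 'I_N) : (j < i)%N -> lessdot (ew j) (ew i).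
Proof.
move=> ji; apply: lessdot_same_dom (dom_ew j) (dom_ew i) _; split.
  by apply: (wle_pair ji) => k; rewrite !ffunE.
by move/ew_inj => ij; rewrite ij ltnn in ji.
Qed.

Lemma lessdot_ewinv (i j : 'I_N) : (i < j)%N -> lessdot (ewinv j) (ewinv i).
Proof.
move=> ij; apply: lessdot_same_dom (dom_ewinv j) (dom_ewinv i) _; split.
  by apply: (wle_pair ij) => k; rewrite !ffunE opprK addrC.
by move/ewinv_inj => ji; rewrite ji ltnn in ij.
Qed.

End Order.

Section Leading.
Variables (n l : nat) (eps : algC).
Local Notation N := n.+1.
Local Notation wt := (wt n).
Local Notation Op := (Op n l).
Local Notation w := (@w n l).
Local Notation hb := (hb n l).
Local Notation tt_ := (tt_ n l).
Local Notation zk := (zk n l eps).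
Local Notation leadX := (leadX n l).
Local Notation leadXinv := (leadXinv n l).
Local Notation prodY := (@prodY n l eps).

Lemma leading_comb (A : Op) (e : 'I_N -> wt) (P : pred 'I_N) c i0 :
  injective e -> resc A =1 comb e c -> (forall j, ~~ P j -> c j = 0) -> P i0 -> c i0 != 0 ->
  (forall j, P j -> j != i0 -> lessdot (e j) (e i0)) ->
  (forall lambda, resc A lambda = \sum_(j | P j) (if lambda == e j then c j else 0)) /\
  leading A (e i0) (c i0).
Proof.
move=> e_inj AE c_out Pi0 ci0 e_lt; split.
  move=> lambda; rewrite AE [RHS]big_mkcond; apply: eq_bigr => j _.
  by case: (boolP (P j)) => // /c_out ->; rewrite if_same.
split; first by rewrite AE comb_at.
split=> // lambda; rewrite AE.
have [j /eqP -> | lambda_out] := pickP (fun j => lambda == e j); last first.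
  by move=> _; rewrite comb_out ?eqxx // => j; apply/negbT/lambda_out.
rewrite comb_at // => ji0 cj; apply: e_lt; last by rewrite -(inj_eq e_inj).
by apply: contraNT cj => /c_out ->; rewrite eqxx.
Qed.

Lemma resc_Xop (i : 'I_N) : exists c, resc (Xop n l i) =1 comb (@ew n) c /\
  (forall j : 'I_N, (i < j)%N -> c j = 0) /\ c i = leadX i.
Proof.
have [c [cE [c_out c_i]]] := resX_shape l (leq_ord i).
by exists c; rewrite inord_val in c_i; split=> // mu; rewrite resc_act act_Xop cE.
Qed.

Lemma resc_Xinvop (i : 'I_N) : exists c, resc (Xinvop n l i) =1 comb (@ewinv n) c /\
  (forall j : 'I_N, (j < i)%N -> c j = 0) /\ c i = leadXinv i.
Proof.
have [|c [cE [c_out c_i]]] := @Sprod_shape n l (fun _ => 1) (n - i) i (subnKC (leq_ord i)).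
  by move=> k _; rewrite rmorph1.
exists c; rewrite inord_val mulr1 in c_i; split=> // mu.
rewrite resc_act act_Xinvop ?leq_ord // -cE; congr Sprod.
by apply: functional_extensionality => nu; rewrite mul1r.
Qed.

Lemma resc_Yop (i : 'I_N) : exists c, resc (Yop l eps i) =1 comb (@ewinv n) c /\
  (forall j : 'I_N, (j < i)%N -> c j = 0) /\ c i = leadXinv i * prodY i.
Proof.
have [|c [cE [c_out c_i]]] := @Sprod_shape n l prodY (n - i) i (subnKC (leq_ord i)).
  move=> k kn; rewrite /prodY rmorph_prod; apply: eq_bigr => kap _.
  by rewrite !rmorphB /= substK_hb substK_zk sg_w -/(jk n k) tk_jk.
by exists c; rewrite inord_val in c_i; split=> // mu; rewrite resc_act act_Yop cE.
Qed.

Lemma leading_lower (A : Op) (i : 'I_N) c : resc A =1 comb (@ew n) c ->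
  (forall j : 'I_N, (i < j)%N -> c j = 0) -> c i != 0 ->
  (forall lambda,
     resc A lambda = \sum_(j < N | (j <= i)%N) (if lambda == ew j then c j else 0)) /\
  leading A (ew i) (c i).
Proof.
move=> AE c_out ci; apply: (leading_comb (P := fun j => (j <= i)%N)) => // [|j|j ji].
- exact: ew_inj.
- by rewrite -ltnNge => /c_out.
- by rewrite -(inj_eq val_inj) => ij; apply: lessdot_ew; rewrite ltn_neqAle ij.
Qed.

Lemma leading_upper (A : Op) (i : 'I_N) c : resc A =1 comb (@ewinv n) c ->
  (forall j : 'I_N, (j < i)%N -> c j = 0) -> c i != 0 ->
  (forall lambda,
     resc A lambda = \sum_(j < N | (i <= j)%N) (if lambda == ewinv j then c j else 0)) /\
  leading A (ewinv i) (c i).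
Proof.
move=> AE c_out ci; apply: (leading_comb (P := fun j => (i <= j)%N)) => // [|j|j ij].
- exact: ewinv_inj.
- by rewrite -ltnNge => /c_out.
- by rewrite -(inj_eq val_inj) eq_sym => ji; apply: lessdot_ewinv; rewrite ltn_neqAle ji.
Qed.

Lemma leadX_neq0 k : (k <= n)%N -> leadX k != 0.
Proof.
move=> kn; apply/prodf_neq0 => j jltk.
have kj : (inord k : 'I_N) != j by rewrite -(inj_eq val_inj) /= inordK // gtn_eqF.
by rewrite mulf_neq0 ?invr_eq0 ?w_subr_subt_neq0 ?w_subr_neq0.
Qed.

Lemma leadXinv_neq0 i : (i <= n)%N -> leadXinv i != 0.
Proof.
move=> iltn; apply/prodf_neq0 => j ij.
have ij' : (inord i : 'I_N) != j by rewrite -(inj_eq val_inj) /= inordK // ltn_eqF.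
by rewrite mulf_neq0 ?invr_eq0 ?w_subr_addt_neq0 ?w_subr_neq0.
Qed.

Lemma prodY_neq0 k : prodY k != 0.
Proof. by rewrite prodf_seq_neq0; apply/allP => kap _; rewrite w_subr_hb_zk_neq0. Qed.

Lemma leadX_ord_max : leadX n =
  \prod_(j < N | j != ord_max) ((w ord_max - w j - tt_) / (w ord_max - w j)).
Proof.
rewrite /leadX; have -> : inord n = ord_max :> 'I_N by apply: val_inj; rewrite /= inordK.
by apply: eq_bigl => j; rewrite -(inj_eq val_inj) /= ltn_neqAle leq_ord andbT.
Qed.

Lemma leadXinv_ord0 : leadXinv 0 =
  \prod_(j < N | j != ord0) ((w ord0 - w j + tt_) / (w ord0 - w j)).
Proof.
rewrite /leadXinv; have -> : inord 0 = ord0 :> 'I_N by apply: val_inj; rewrite /= inordK.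
by apply: eq_bigl => j; rewrite -(inj_eq val_inj) /= lt0n.
Qed.

Lemma prodY_ord0 : prodY 0 = \prod_(1 <= k < l.+1) (w ord0 - hb - zk k).
Proof.
rewrite /prodY; have -> : inord 0 = ord0 :> 'I_N by apply: val_inj; rewrite /= inordK.
by rewrite /index_iota subSS subn0.
Qed.

End Leading.

Theorem proposition5p8 (n l : nat) (eps : algC) :
  (0 < l)%N -> l.-primitive_root eps ->
  (* (1) *)
  ((forall i : 'I_n.+1, exists g : 'I_n.+1 -> Kf n l,
      (forall lambda, resc (Xop n l i) lambda =
         \sum_(j < n.+1 | (j <= i)%N) (if lambda == ew j then g j else 0)) /\
      leading (Xop n l i) (ew i) (g i)) /\
   leading (Xop n l n) (ew ord_max)
     (\prod_(j < n.+1 | j != ord_max)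
        ((w l ord_max - w l j - tt_ n l) / (w l ord_max - w l j)))) /\
  (* (2) *)
  ((forall i : 'I_n.+1, exists g : 'I_n.+1 -> Kf n l,
      (forall lambda, resc (Xinvop n l i) lambda =
         \sum_(j < n.+1 | (i <= j)%N) (if lambda == ewinv j then g j else 0)) /\
      leading (Xinvop n l i) (ewinv i) (g i)) /\
   leading (Xinvop n l 0) (ewinv ord0)
     (\prod_(j < n.+1 | j != ord0)
        ((w l ord0 - w l j + tt_ n l) / (w l ord0 - w l j)))) /\
  (* (3) *)
  ((forall i : 'I_n.+1, exists g : 'I_n.+1 -> Kf n l,
      (forall lambda, resc (Yop l eps i) lambda =
         \sum_(j < n.+1 | (i <= j)%N) (if lambda == ewinv j then g j else 0)) /\
      leading (Yop l eps i) (ewinv i) (g i)) /\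
   leading (Yop l eps ord0) (ewinv ord0)
     ((\prod_(1 <= k < l.+1) (w l ord0 - hb n l - zk n l eps k)) *
      \prod_(j < n.+1 | j != ord0)
        ((w l ord0 - w l j + tt_ n l) / (w l ord0 - w l j)))).
Proof.
move=> _ _; split; [split | split; [split | split]].
- move=> i; have [c [cE [c_out c_i]]] := resc_Xop l i.
  exists c; apply: (leading_lower cE c_out).
  by rewrite c_i leadX_neq0 ?leq_ord.
- have [c [cE [c_out c_i]]] := resc_Xop l (@ord_max n).
  have [|_] := leading_lower cE c_out; first by rewrite c_i leadX_neq0.
  by rewrite c_i leadX_ord_max.
- move=> i; have [c [cE [c_out c_i]]] := resc_Xinvop l i.
  exists c; apply: (leading_upper cE c_out).
  by rewrite c_i leadXinv_neq0 ?leq_ord.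
- have [c [cE [c_out c_i]]] := resc_Xinvop l (@ord0 n).
  have [|_] := leading_upper cE c_out; first by rewrite c_i leadXinv_neq0.
  by rewrite c_i leadXinv_ord0.
- move=> i; have [c [cE [c_out c_i]]] := resc_Yop l eps i.
  exists c; apply: (leading_upper cE c_out).
  by rewrite c_i mulf_neq0 ?leadXinv_neq0 ?prodY_neq0 ?leq_ord.
have [c [cE [c_out c_i]]] := resc_Yop l eps (@ord0 n).
have [|_] := leading_upper cE c_out; first by rewrite c_i mulf_neq0 ?leadXinv_neq0 ?prodY_neq0.
by rewrite c_i leadXinv_ord0 prodY_ord0 mulrC.
Qed.
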